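(* Let $L,U\in\mathbb{P}_d$ with $L\prec U$ and let $S\in\mathbb{H}_d$ be arbitrary. Write $U-L=P^*P$ and take an eigendecomposition $PSP^*=Q\Lambda Q^*$ with $Q$ unitary and $\Lambda$ real diagonal. Then a solution of $$\max_{L\preceq Z\preceq U}\ \operatorname{tr}(SZ)$$ is given by $Z=L+P^*Q[\operatorname{sgn}(\Lambda)]_+Q^*P$.
   Context: $\mathbb{H}_d$ denotes the $d\times d$ Hermitian matrices and $\mathbb{P}_d$ the $d\times d$ Hermitian positive definite matrices; $\preceq$ ($\prec$) is the Löwner order ($A\preceq B$ iff $B-A$ is positive semidefinite, $A\prec B$ iff $B-A$ is positive definite). For real diagonal $\Lambda$, $[\operatorname{sgn}(\Lambda)]_+$ is the diagonal matrix with $i$-th diagonal entry $1$ if $\lambda_{ii}>0$ and $0$ otherwise. *)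

(* Complex scalars: an arbitrary numClosedFieldType C
   (e.g. algC, or complex R for R : rcfType); conjugation is Num.conj. *)
From HB Require Import structures.
From mathcomp Require Import all_boot all_order all_algebra.
Set Implicit Arguments. Unset Strict Implicit. Unset Printing Implicit Defensive.
Import Order.TTheory GRing.Theory Num.Theory.
Local Open Scope ring_scope.
Local Open Scope sesquilinear_scope.

Section Loewner.
Variables (C : numClosedFieldType) (d : nat).

Definition psdmx (A : 'M[C]_d) : Prop :=
  A \is hermsymmx /\ forall v : 'rV[C]_d, 0 <= (v *m A *m v ^t*) 0 0.

Definition pdmx (A : 'M[C]_d) : Prop :=
  A \is hermsymmx /\ forall v : 'rV[C]_d, v != 0 -> 0 < (v *m A *m v ^t*) 0 0.

Definition loewner_le (A B : 'M[C]_d) : Prop := psdmx (B - A).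
Definition loewner_lt (A B : 'M[C]_d) : Prop := pdmx (B - A).

(* diagonal of [sgn(Lambda)]_+ : 1 where lambda_ii > 0, 0 otherwise *)
Definition pos_sgn (lam : 'rV[C]_d) : 'rV[C]_d :=
  \row_i (if 0 < lam 0 i then 1 else 0).

End Loewner.

From HB Require Import structures.
From mathcomp Require Import all_boot all_order all_algebra.
Import Order.TTheory GRing.Theory Num.Theory.
Local Open Scope ring_scope.
Local Open Scope sesquilinear_scope.

(* With K := Q^* P one has U - L = K^* K and K S K^* = Λ.  Writing
   W = L + K^* T K turns L ⪯ W ⪯ U into 0 ⪯ T ⪯ I, which forces
   0 <= T_ii <= 1, and turns tr(S W) into tr(S L) + Σ λ_i T_ii.  This sum is
   largest for T_ii = [λ_i > 0], i.e. for T = [sgn Λ]_+, which gives Z. *)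

Lemma trmxC_mul (C : numClosedFieldType) m n p
    (A : 'M[C]_(m, n)) (B : 'M[C]_(n, p)) :
  (A *m B) ^t* = B ^t* *m A ^t*.
Proof. by rewrite trmx_mul map_mxM. Qed.

Lemma trmxC1 (C : numClosedFieldType) n : (1%:M : 'M[C]_n) ^t* = 1%:M.
Proof. by rewrite trmx1 map_mx1. Qed.

Section Loewner.
Context {C : numClosedFieldType} {n : nat}.
Implicit Types (A K L T U W : 'M[C]_n) (e : 'rV[C]_n).

Lemma psdmx_congr {A} K : psdmx A -> psdmx (K ^t* *m A *m K).
Proof.
rewrite /psdmx !is_hermitianmxE expr0 !scale1r => -[/eqP hA A_ge0]; split.
  by rewrite !trmxC_mul trmxCK -hA mulmxA.
by move=> v; have := A_ge0 (v *m K ^t*); rewrite trmxC_mul trmxCK !mulmxA.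
Qed.

Lemma psdmx_diag e : (forall i, 0 <= e 0 i) -> psdmx (diag_mx e).
Proof.
move=> e_ge0; split.
  rewrite is_hermitianmxE expr0 scale1r; apply/eqP/matrixP => i j.
  rewrite !mxE eq_sym; case: eqP => [->|_]; last by rewrite mulr0n rmorph0.
  by rewrite !mulr1n; apply/esym/CrealP/ger0_real.
move=> v; rewrite mul_mx_diag mxE; apply: sumr_ge0 => i _.
by rewrite !mxE mulrAC mulr_ge0 ?mul_conjC_ge0.
Qed.

Lemma psdmx_diag_ge0 {A} i : psdmx A -> 0 <= A i i.
Proof.
case=> _ /(_ (delta_mx 0 i)).
have -> : (delta_mx 0 i : 'rV[C]_n) ^t* = delta_mx i 0.
  by apply/matrixP => a b; rewrite !mxE andbC conjC_nat.
by rewrite -rowE -colE !mxE.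
Qed.

Lemma pdmx_unit {A} : pdmx A -> A \in unitmx.
Proof.
case=> _ A_gt0; rewrite unitmxE unitfE; apply/negP => /det0P[v v_neq0 vA0].
by have := A_gt0 v v_neq0; rewrite vA0 mul0mx mxE ltxx.
Qed.

Lemma loewner_itv_diag_congr {L U K e} :
  U - L = K ^t* *m K -> (forall i, 0 <= e 0 i <= 1) ->
  let Z := L + K ^t* *m diag_mx e *m K in
  loewner_le L Z /\ loewner_le Z U.
Proof.
move=> UL e01 Z; split.
  rewrite /loewner_le /Z addrC addKr; apply/psdmx_congr/psdmx_diag => i.
  by case/andP: (e01 i).
rewrite /loewner_le.
have -> : U - Z = K ^t* *m diag_mx (const_mx 1 - e) *m K.
  rewrite /Z opprD addrA UL linearB /= diag_const_mx.
  by rewrite mulmxBr mulmxBl mulmx1.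
apply/psdmx_congr/psdmx_diag => i; rewrite !mxE subr_ge0.
by case/andP: (e01 i).
Qed.

(* T is K^{-*} (W - L) K^{-1}; congruence by K^{-1} maps U - L to 1. *)
Lemma loewner_itv_congr_inv {L U W K} :
  K \in unitmx -> U - L = K ^t* *m K ->
  loewner_le L W -> loewner_le W U ->
  exists2 T, W - L = K ^t* *m T *m K & forall i, 0 <= T i i <= 1.
Proof.
move=> K_unit UL LW WU; pose Ki := invmx K.
have KiK : Ki ^t* *m K ^t* = 1%:M by rewrite -trmxC_mul mulmxV ?trmxC1.
exists (Ki ^t* *m (W - L) *m Ki).
  by rewrite !mulmxA -trmxC_mul mulVmx // trmxC1 mul1mx mulmxKV.
move=> i; apply/andP; split; first exact/psdmx_diag_ge0/psdmx_congr.
have := psdmx_diag_ge0 i (psdmx_congr Ki WU).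
have -> : U - W = K ^t* *m K - (W - L) by rewrite -UL opprB addrA subrK.
rewrite mulmxBr mulmxBl mulmxA KiK mul1mx mulmxV // !mxE eqxx mulr1n.
by rewrite subr_ge0.
Qed.

Lemma mxtrace_mul_congr {S K} T {lam : 'rV[C]_n} :
  K *m S *m K ^t* = diag_mx lam ->
  \tr (S *m (K ^t* *m T *m K)) = \tr (diag_mx lam *m T).
Proof. by move=> KSK; rewrite !mulmxA mxtrace_mulC !mulmxA KSK. Qed.

Lemma pos_sgn_itv (lam : 'rV[C]_n) i : 0 <= pos_sgn lam 0 i <= 1.
Proof. by rewrite mxE; case: ifP; rewrite lexx ler01. Qed.

Lemma mxtrace_diag_mul_le_pos_sgn (lam : 'rV[C]_n) T :
  (forall i, lam 0 i \is Num.real) -> (forall i, 0 <= T i i <= 1) ->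
  \tr (diag_mx lam *m T) <= \tr (diag_mx lam *m diag_mx (pos_sgn lam)).
Proof.
move=> lam_real T01; rewrite !mul_diag_mx /mxtrace; apply: ler_sum => i _.
rewrite !mxE eqxx mulr1n; have /andP[T_ge0 T_le1] := T01 i.
case: ifP => [lam_gt0 | /negbT lam_le0].
  by rewrite mulr1 ler_piMr // ltW.
rewrite mulr0 mulr_le0_ge0 //.
by rewrite real_leNgt ?lam_le0 ?real0.
Qed.

End Loewner.

Theorem theorem7 (C : numClosedFieldType) (d : nat)
    (L U S P Q : 'M[C]_d) (lam : 'rV[C]_d) :
  pdmx L -> pdmx U -> loewner_lt L U ->
  S \is hermsymmx ->
  U - L = P ^t* *m P ->
  Q \is unitarymx ->
  (forall i, lam 0 i \is Num.real) ->
  P *m S *m P ^t* = Q *m diag_mx lam *m Q ^t* ->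
  let Z := L + P ^t* *m Q *m diag_mx (pos_sgn lam) *m Q ^t* *m P in
  loewner_le L Z /\ loewner_le Z U /\
  (forall W : 'M[C]_d, loewner_le L W -> loewner_le W U ->
     \tr (S *m W) <= \tr (S *m Z)).
Proof.
move=> _ _ UL_pd _ UL Q_unitary lam_real PSP Z.
pose K := Q ^t* *m P.
have QtQ : Q ^t* *m Q = 1%:M by apply/mulmx1C/unitarymxP.
have UK : U - L = K ^t* *m K.
  by rewrite trmxC_mul trmxCK mulmxA mulmxtVK.
have KSK : K *m S *m K ^t* = diag_mx lam.
  transitivity (Q ^t* *m (P *m S *m P ^t*) *m Q).
    by rewrite trmxC_mul trmxCK !mulmxA.
  by rewrite PSP !mulmxA QtQ mul1mx -mulmxA QtQ mulmx1.
have K_unit : K \in unitmx.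
  have := pdmx_unit UL_pd; rewrite UL !unitmx_mul => /andP[_ ->].
  by rewrite unitarymx_unit ?trmxC_unitary.
have ZK : Z = L + K ^t* *m diag_mx (pos_sgn lam) *m K.
  by rewrite /Z trmxC_mul trmxCK !mulmxA.
have [LZ ZU] := loewner_itv_diag_congr UK (pos_sgn_itv lam).
rewrite ZK; split=> //; split=> // W LW WU.
have [T WL T01] := loewner_itv_congr_inv K_unit UK LW WU.
have trSL X : \tr (S *m X) = \tr (S *m L) + \tr (S *m (X - L)).
  by rewrite mulmxBr linearB /= addrC subrK.
rewrite trSL [leRHS]trSL lerD2l WL (addrC L) addrK !(mxtrace_mul_congr _ KSK).
exact: mxtrace_diag_mul_le_pos_sgn.
Qed.
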